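(* There is a constant $C>0$ such that the following holds. Let $a\neq b$ be points of $\mathbb{R}/\tau\mathbb{Z}$. Let $n_1<n_1+k_1$ be two consecutive elements of $Z(a,b)$ (i.e. $k_1>0$ and no element of $Z(a,b)$ lies strictly between them), and let $n_2<n_2+k_2$ be another pair of consecutive elements of $Z(a,b)$. Then $k_1<Ck_2$.
   Context: $\tau=\frac{1+\sqrt5}{2}$. For real $x$, $x\bmod\tau$ is its image in $\mathbb{R}/\tau\mathbb{Z}$. For $a,b\in\mathbb{R}/\tau\mathbb{Z}$, $(a,b)$ denotes the open arc from $a$ to $b$ in the positive direction of the circle, and $Z(a,b)$ is the set of integers $n$ with $n\bmod\tau\in(a,b)$. The constant $C$ is independent of all variables. *)

From Stdlib Require Import Reals Lra Lia ZArith.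
Open Scope R_scope.

Definition tau : R := (1 + sqrt 5) / 2.

Definition modtau (x : R) : R := x - tau * IZR (Int_part (x / tau)).

(* Points of R / tau Z are represented by real numbers; two reals represent
   the same point iff modtau of their difference is 0.
   in_arc a b x : the image of x in R/tauZ lies in the open arc from a to b
   (positive direction), i.e. 0 < (x - a) mod tau < (b - a) mod tau. *)
Definition in_arc (a b x : R) : Prop :=
  0 < modtau (x - a) /\ modtau (x - a) < modtau (b - a).

Definition Zab (a b : R) (n : Z) : Prop := in_arc a b (IZR n).

Definition consecutive (a b : R) (n k : Z) : Prop :=
  (0 < k)%Z /\ Zab a b n /\ Zab a b (n + k) /\
  (forall m : Z, (n < m < n + k)%Z -> ~ Zab a b m).

(** The golden ratio is badly approximable: [k^2 - k q - q^2] is a nonzero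
    integer whenever [k <> 0], and it factors as [d (d + (2 tau - 1) q)] with
    [d = k - tau q].  If [n] and [n + k] both lie in [Z(a,b)], then [d] is
    shorter than the arc length [L], which forces [k L] to be bounded below.
    Conversely, the Fibonacci numbers satisfy [F_(j+1) = psi^j + tau F_j]
    with [psi = 1 - tau = -1/tau], so consecutive Fibonacci numbers move a
    point of the circle by small steps of opposite signs; once [|psi^j| < L]
    one of [n + F_(j+2)], [n + F_(j+3)] falls back into the arc, which bounds
    the gap [k] by [F_(j+3) <= tau^(j+2)] and [k L] from above. *)

From Stdlib Require Import Reals ZArith Lra Lia Psatz.
Open Scope R_scope.

Lemma golden_form_eq0 (k q : Z) : (k * k - k * q - q * q = 0)%Z -> k = 0%Z.
Proof.
  revert k q.
  enough (H : forall n k q, (Z.abs k <= Z.of_nat n)%Z ->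
            (k * k - k * q - q * q = 0)%Z -> k = 0%Z)
    by (intros k q; apply (H (Z.abs_nat k)); lia).
  induction n as [|n IH]; intros k q Hk Hform; [lia|].
  (* The form is odd unless both [k] and [q] are even: infinite descent. *)
  assert (Heven : (k = 2 * (k / 2) /\ q = 2 * (q / 2))%Z).
  { pose proof (Z.div_mod k 2 ltac:(lia)); pose proof (Z.div_mod q 2 ltac:(lia)).
    pose proof (Z.mod_pos_bound k 2 ltac:(lia)).
    pose proof (Z.mod_pos_bound q 2 ltac:(lia)).
    assert (k mod 2 = 0 /\ q mod 2 = 0)%Z by nia.
    lia. }
  destruct Heven as [Ek Eq].
  assert (k / 2 = 0)%Z by (apply (IH (k / 2) (q / 2))%Z; nia).
  lia.
Qed.

Lemma tau_sqr : tau * tau = tau + 1.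
Proof.
  unfold tau. pose proof (sqrt_sqrt 5 ltac:(lra)). nra.
Qed.

Lemma tau_bounds : 1.6 < tau < 1.65.
Proof.
  unfold tau. pose proof (sqrt_sqrt 5 ltac:(lra)). pose proof (sqrt_pos 5).
  split; nra.
Qed.

Lemma golden_badly_approximable (k q : Z) :
  (0 < k)%Z -> 1 < 4 * IZR k * Rabs (IZR k - tau * IZR q).
Proof.
  intros Hk.
  set (d := IZR k - tau * IZR q).
  pose proof tau_bounds. pose proof tau_sqr.
  assert (Hk1 : 1 <= IZR k) by (apply IZR_le; lia).
  destruct (Rlt_or_le (Rabs d) 1) as [Hd|Hd]; [|nra].
  assert (Hform : IZR (k * k - k * q - q * q) = d * (d + (2 * tau - 1) * IZR q)).
  { rewrite !minus_IZR, !mult_IZR. unfold d.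
    replace (tau * tau * IZR q * IZR q) with ((tau + 1) * IZR q * IZR q) by nra.
    nra. }
  assert (Hnorm : 1 <= Rabs d * Rabs (d + (2 * tau - 1) * IZR q)).
  { rewrite <- Rabs_mult, <- Hform, <- abs_IZR. apply IZR_le.
    assert (k * k - k * q - q * q <> 0)%Z by (intros E; apply golden_form_eq0 in E; lia).
    lia. }
  assert (Hq : tau * Rabs (IZR q) <= IZR k + Rabs d).
  { replace (tau * Rabs (IZR q)) with (Rabs (IZR k - d)).
    - unfold Rminus. rewrite <- (Rabs_Ropp d).
      rewrite <- (Rabs_right (IZR k)) at 2 by lra. apply Rabs_triang.
    - replace (IZR k - d) with (tau * IZR q) by (unfold d; ring).
      rewrite Rabs_mult, (Rabs_right tau) by lra. reflexivity. }
  assert (Hcofactor : Rabs (d + (2 * tau - 1) * IZR q) < 4 * IZR k).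
  { pose proof (Rabs_triang d ((2 * tau - 1) * IZR q)) as Htri.
    rewrite Rabs_mult, (Rabs_right (2 * tau - 1)) in Htri by lra.
    pose proof (Rabs_pos (IZR q)). nra. }
  assert (Hd0 : 0 < Rabs d).
  { destruct (Rle_lt_or_eq_dec 0 (Rabs d) (Rabs_pos d)) as [|E]; [assumption|].
    rewrite <- E in Hnorm. lra. }
  pose proof (Rmult_lt_compat_l (Rabs d) _ _ Hd0 Hcofactor).
  lra.
Qed.

Lemma modtau_spec (y : R) : y = modtau y + tau * IZR (Int_part (y / tau)).
Proof. unfold modtau. ring. Qed.

Lemma modtau_range (y : R) : 0 <= modtau y < tau.
Proof.
  unfold modtau. pose proof tau_bounds.
  destruct (base_Int_part (y / tau)) as [H1 H2].
  replace y with (tau * (y / tau)) at 1 3 by (field; lra).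
  split; nra.
Qed.

Lemma modtau_unique (w : R) (c : Z) : 0 <= w < tau -> modtau (w + tau * IZR c) = w.
Proof.
  intros Hw. set (y := w + tau * IZR c).
  pose proof (modtau_spec y) as Ey. pose proof (modtau_range y). pose proof tau_bounds.
  set (c' := Int_part (y / tau)) in Ey.
  assert (E : w - modtau y = tau * IZR (c' - c)) by (rewrite minus_IZR; unfold y in *; lra).
  assert (Hlo : (-1 < c' - c)%Z) by (apply lt_IZR; nra).
  assert (Hhi : (c' - c < 1)%Z) by (apply lt_IZR; nra).
  replace (c' - c)%Z with 0%Z in E by lia.
  lra.
Qed.

Lemma Zab_diff_near_multiple (a b : R) (n m : Z) :
  Zab a b n -> Zab a b m ->
  exists q : Z, Rabs (IZR (m - n) - tau * IZR q) < modtau (b - a).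
Proof.
  unfold Zab, in_arc. intros Hn Hm.
  exists (Int_part ((IZR m - a) / tau) - Int_part ((IZR n - a) / tau))%Z.
  pose proof (modtau_spec (IZR n - a)). pose proof (modtau_spec (IZR m - a)).
  apply Rabs_def1; rewrite !minus_IZR in *; lra.
Qed.

Lemma consecutive_gap_lower (a b : R) (n k : Z) :
  consecutive a b n k -> 1 < 4 * IZR k * modtau (b - a).
Proof.
  intros [Hk [Hn [Hnk _]]].
  destruct (Zab_diff_near_multiple a b n (n + k) Hn Hnk) as [q Hq].
  replace (n + k - n)%Z with k in Hq by ring.
  pose proof (golden_badly_approximable k q Hk).
  assert (0 < IZR k) by (apply IZR_lt; lia).
  nra.
Qed.

Fixpoint fib (n : nat) : Z :=
  match n with
  | O => 0%Z
  | S O => 1%Z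
  | S ((S m) as p) => (fib m + fib p)%Z
  end.

Lemma fib_SS (j : nat) : fib (S (S j)) = (fib j + fib (S j))%Z.
Proof. reflexivity. Qed.

Lemma fib_S_pos (j : nat) : (1 <= fib (S j))%Z.
Proof.
  enough (H : (0 <= fib j /\ 1 <= fib (S j))%Z) by apply H.
  induction j as [|j IH]; [simpl; lia|].
  rewrite fib_SS. lia.
Qed.

Lemma fib_S_le_pow (j : nat) : IZR (fib (S j)) <= tau ^ j.
Proof.
  enough (H : IZR (fib (S j)) <= tau ^ j /\ IZR (fib (S (S j))) <= tau ^ S j) by apply H.
  pose proof tau_bounds.
  induction j as [|j [IH1 IH2]]; [simpl; lra|].
  split; [exact IH2|].
  rewrite fib_SS, plus_IZR.
  replace (tau ^ S (S j)) with ((tau + 1) * tau ^ j) by (rewrite <- tau_sqr; simpl; ring).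
  change (tau ^ S j) with (tau * tau ^ j) in IH2. lra.
Qed.

Lemma fib_near_multiple (j : nat) :
  IZR (fib (S j)) = (1 - tau) ^ j + tau * IZR (fib j).
Proof.
  enough (H : IZR (fib (S j)) = (1 - tau) ^ j + tau * IZR (fib j) /\
              IZR (fib (S (S j))) = (1 - tau) ^ S j + tau * IZR (fib (S j))) by apply H.
  pose proof tau_sqr as Hsq.
  induction j as [|j [IH1 IH2]]; [simpl; split; lra|].
  split; [exact IH2|].
  rewrite (fib_SS (S j)), plus_IZR, IH2.
  change ((1 - tau) ^ S (S j)) with ((1 - tau) * ((1 - tau) * (1 - tau) ^ j)).
  change ((1 - tau) ^ S j) with ((1 - tau) * (1 - tau) ^ j).
  set (A := IZR (fib (S j))). set (P := (1 - tau) ^ j).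
  assert (tau * tau * A = (tau + 1) * A) by (rewrite Hsq; ring).
  assert (tau * tau * P = (tau + 1) * P) by (rewrite Hsq; ring).
  lra.
Qed.

Lemma opposite_shift_in_interval (L p s t : R) :
  0 < p < L -> s * t < 0 -> Rabs s + Rabs t < L ->
  0 < p + s < L \/ 0 < p + t < L.
Proof.
  intros Hp Hst Hsum.
  destruct (Rle_or_lt 0 s) as [Hs|Hs].
  - assert (t < 0) by nra.
    rewrite Rabs_right, Rabs_left in Hsum by lra.
    destruct (Rlt_or_le (p + s) L); [left|right]; lra.
  - assert (0 < t) by nra.
    rewrite Rabs_left, Rabs_right in Hsum by lra.
    destruct (Rlt_or_le (p + t) L); [right|left]; lra.
Qed.

Lemma Zab_shift (a b s : R) (n M F : Z) :
  IZR M = s + tau * IZR F ->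
  0 < modtau (IZR n - a) + s < modtau (b - a) -> Zab a b (n + M).
Proof.
  unfold Zab, in_arc. intros EM Hs.
  pose proof (modtau_spec (IZR n - a)). pose proof (modtau_range (b - a)).
  replace (IZR (n + M) - a)
    with (modtau (IZR n - a) + s + tau * IZR (Int_part ((IZR n - a) / tau) + F))
    by (rewrite !plus_IZR; lra).
  rewrite modtau_unique by lra.
  exact Hs.
Qed.

Lemma consecutive_le_fib (a b : R) (n k : Z) (j : nat) :
  consecutive a b n k -> 1 < modtau (b - a) * tau ^ j -> (k <= fib (j + 3))%Z.
Proof.
  intros [_ [Hn [_ Hgap]]] Hj.
  destruct (Z_le_gt_dec k (fib (j + 3))) as [Hle|Hgt]; [exact Hle|exfalso].
  pose proof tau_bounds. pose proof tau_sqr.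
  set (psi := 1 - tau).
  set (s := psi ^ S j).
  assert (Hs0 : s <> 0) by (apply pow_nonzero; unfold psi; lra).
  assert (Habs : Rabs psi = tau - 1) by (unfold psi; rewrite Rabs_left by lra; ring).
  (* [|psi^j| tau^j = 1], so [1 < L tau^j] says [|s| + |psi s| = |psi^j| < L]. *)
  assert (Hsmall : Rabs s + Rabs (psi * s) < modtau (b - a)).
  { assert (Hpow : Rabs (psi ^ j) * tau ^ j = 1).
    { rewrite <- RPow_abs, <- Rpow_mult_distr, Habs.
      replace ((tau - 1) * tau) with 1 by lra. apply pow1. }
    assert (0 < tau ^ j) by (apply pow_lt; lra).
    assert (Rabs (psi ^ j) < modtau (b - a)) by nra.
    unfold s. simpl pow. rewrite !Rabs_mult, Habs.
    replace ((tau - 1) * Rabs (psi ^ j) + (tau - 1) * ((tau - 1) * Rabs (psi ^ j)))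
      with (Rabs (psi ^ j) * ((tau - 1) * tau)) by ring.
    replace ((tau - 1) * tau) with 1 by lra. lra. }
  assert (Hopp : s * (psi * s) < 0).
  { assert (0 < s * s) by (destruct (Rlt_or_le 0 s); nra).
    unfold psi in *. nra. }
  assert (E2 : IZR (fib (S (S j))) = s + tau * IZR (fib (S j)))
    by exact (fib_near_multiple (S j)).
  assert (E3 : IZR (fib (S (S (S j)))) = psi * s + tau * IZR (fib (S (S j))))
    by exact (fib_near_multiple (S (S j))).
  replace (j + 3)%nat with (S (S (S j))) in Hgt by lia.
  pose proof (fib_S_pos j). pose proof (fib_S_pos (S j)). pose proof (fib_SS (S j)).
  destruct (opposite_shift_in_interval _ _ _ _ Hn Hopp Hsmall) as [Hhit|Hhit].
  - apply (Hgap (n + fib (S (S j))))%Z; [lia|]. exact (Zab_shift _ _ _ _ _ _ E2 Hhit).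
  - apply (Hgap (n + fib (S (S (S j)))))%Z; [lia|]. exact (Zab_shift _ _ _ _ _ _ E3 Hhit).
Qed.

Lemma scaled_bound_le_cube (x L K : R) :
  1 < x -> 0 < L < x -> (forall j, 1 < L * x ^ j -> K <= x ^ (j + 2)) ->
  K * L <= x ^ 3.
Proof.
  intros Hx HL HK.
  destruct (Pow_x_infinity x ltac:(rewrite Rabs_right; lra) (2 / L)) as [N HN].
  specialize (HN N (le_n N)).
  rewrite Rabs_right in HN by (apply Rle_ge, pow_le; lra).
  assert (HN' : 1 < L * x ^ N).
  { apply Rge_le, (Rmult_le_compat_l L) in HN; [|lra].
    replace (L * (2 / L)) with 2 in HN by (field; lra). lra. }
  clear HN. revert HN'. induction N as [|j IH]; intros Hj.
  - specialize (HK 0%nat Hj). simpl in *. nra.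
  - destruct (Rlt_or_le 1 (L * x ^ j)) as [Hj'|Hj']; [exact (IH Hj')|].
    specialize (HK (S j) Hj).
    replace (x ^ (S j + 2)) with (x ^ 3 * x ^ j) in HK
      by (rewrite <- pow_add; f_equal; lia).
    assert (0 < x ^ 3) by (apply pow_lt; lra).
    assert (0 < x ^ j) by (apply pow_lt; lra).
    nra.
Qed.

Lemma consecutive_gap_upper (a b : R) (n k : Z) :
  0 < modtau (b - a) -> consecutive a b n k -> IZR k * modtau (b - a) <= tau ^ 3.
Proof.
  intros HL Hcons.
  pose proof tau_bounds. pose proof (modtau_range (b - a)).
  apply scaled_bound_le_cube; [lra | lra |].
  intros j Hj.
  apply Rle_trans with (IZR (fib (S (j + 2)))).
  - apply IZR_le. replace (S (j + 2)) with (j + 3)%nat by lia.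
    exact (consecutive_le_fib a b n k j Hcons Hj).
  - apply fib_S_le_pow.
Qed.

Theorem lemma12 :
  exists C : R, 0 < C /\
    forall (a b : R), modtau (b - a) <> 0 ->
    forall (n1 k1 n2 k2 : Z),
      consecutive a b n1 k1 -> consecutive a b n2 k2 ->
      IZR k1 < C * IZR k2.
Proof.
  pose proof tau_bounds.
  assert (Hcube : 0 < tau ^ 3) by (apply pow_lt; lra).
  exists (4 * tau ^ 3). split; [lra|].
  intros a b HL n1 k1 n2 k2 H1 H2.
  assert (HL0 : 0 < modtau (b - a)) by (pose proof (modtau_range (b - a)); lra).
  pose proof (consecutive_gap_upper a b n1 k1 HL0 H1) as Hupper.
  pose proof (consecutive_gap_lower a b n2 k2 H2) as Hlower.
  apply (Rmult_lt_reg_r (modtau (b - a))); [exact HL0|].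
  nra.
Qed.
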